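(* Let $E\subset U$ be a set with infinitely many points such that $\overline E\cap\partial U=\{a_1,\dots,a_m\}$ is finite ($m\ge0$) and $E$ is contained in the union of finitely many Stolz angles with vertices $a_1,\dots,a_m$ together with a compact subset of $U$. Take $q(z)=(z-a_1)(z-a_2)\cdots(z-a_m)$ (with $q\equiv1$ if $m=0$). Then there exist $\sigma>0$, $C>0$ and $N\in\mathbb{N}$ such that $M_n(E)\le Cn^{-\sigma}$ for all $n\ge N$.
   Context: $U$ is the open unit disc. A Stolz angle with vertex $a\in\partial U$ is a set of the form $\{z\in U: |z-a|\le c(1-|z|)\}$ with a constant $c>1$. For $Z_n=(z_1,\dots,z_n)$: $B(Z_n,z)=\prod_{j=1}^n\frac{z-z_j}{1-\overline{z_j}z}$, $B_q(Z_n,z)=B(Z_n,z)q(z)$ (empty product $=1$), $Z_{j-1}=(z_1,\dots,z_{j-1})$, $V(Z_n)=\prod_{j=1}^n|B_q(Z_{j-1},z_j)|$, $M(Z_n)=\sup_{z\in E}|B_q(Z_n,z)|$, $V_n(E)=\sup_{Z_n\in E^n}V(Z_n)$, $M_n(E)=\inf\{M(Z_n):Z_n\in E^n,V(Z_n)=V_n(E)\}$. *)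

From mathcomp Require Import all_boot all_order all_algebra.
From mathcomp Require Import all_classical all_reals all_analysis.
From mathcomp Require Import complex.
Import Order.TTheory GRing.Theory Num.Theory.
Import numFieldNormedType.Exports.

Set Implicit Arguments.
Unset Strict Implicit.
Unset Printing Implicit Defensive.

Local Open Scope ring_scope.
Local Open Scope classical_set_scope.

(* real modulus |z| of a complex number (the library norm `|z| is
   complex-valued with zero imaginary part; we take its real part) *)
Definition cabs (R : rcfType) (z : R[i]) : R := complex.Re `|z|.

Definition unit_disc (R : rcfType) : set R[i] := [set z | cabs z < 1].
Definition unit_circle (R : rcfType) : set R[i] := [set z | cabs z = 1].

(* Stolz angle with vertex a and constant c (only meaningful for c > 1) *)
Definition stolz (R : rcfType) (a : R[i]) (c : R) : set R[i] :=
  [set z | cabs z < 1 /\ cabs (z - a) <= c * (1 - cabs z)].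

Definition blaschke (R : rcfType) (Z : seq R[i]) (z : R[i]) : R[i] :=
  \prod_(w <- Z) ((z - w) / (1 - w^* * z)).

Definition qpoly (R : rcfType) (A : seq R[i]) (z : R[i]) : R[i] :=
  \prod_(a <- A) (z - a).

Definition Bq (R : rcfType) (A : seq R[i]) (Z : seq R[i]) (z : R[i]) : R[i] :=
  blaschke Z z * qpoly A z.

Definition Vpts (R : rcfType) (A : seq R[i]) (Z : seq R[i]) : R :=
  \prod_(j < size Z) cabs (Bq A (take j Z) (nth 0 Z j)).

Definition Mpts (R : realType) (A : seq R[i]) (E : set R[i]) (Z : seq R[i]) : R :=
  sup [set cabs (Bq A Z z) | z in E].

Definition tuples_in (R : rcfType) (E : set R[i]) (n : nat) : set (seq R[i]) :=
  [set Z | size Z = n /\ forall z, z \in Z -> E z].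

Definition Vn (R : realType) (A : seq R[i]) (E : set R[i]) (n : nat) : R :=
  sup [set Vpts A Z | Z in tuples_in E n].

Definition Mn (R : realType) (A : seq R[i]) (E : set R[i]) (n : nat) : R :=
  inf [set Mpts A E Z | Z in [set Z | tuples_in E n Z /\ Vpts A Z = Vn A E n]].

From Pilot Require Import Defs.
From mathcomp Require Import all_boot all_order all_algebra.
From mathcomp Require Import all_classical all_reals all_analysis.
From mathcomp Require Import complex.
From mathcomp Require Import ring lra.
Import Order.TTheory GRing.Theory Num.Theory.
Import numFieldNormedType.Exports.

Set Implicit Arguments.
Unset Strict Implicit.
Unset Printing Implicit Defensive.

Local Open Scope ring_scope.
Local Open Scope classical_set_scope.

(* Let Z be an n-tuple of points of E at which V attains V_n(E).  V is
   symmetric and V(P ++ x :: W) = V(P ++ W) |B_q(P ++ W, x)|, so exchanging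
   x for any z in E shows M(Z) <= |B_q(P ++ W, x)| for every point x of Z.
   It remains to find one x with |B_q(P ++ W, x)| = O(u), where u = n^(-1/4).
   If |x| > 1 - u for some x, then x lies in a Stolz angle at a zero a of q,
   hence |q(x)| = O(|x - a|) = O(1 - |x|) = O(u).  Otherwise Z lies in the
   disc of radius 1 - u, which meets O(u^-2) squares of side u/4; some square
   holds t + 1 >= c n u^2 points of Z, and for x among them each of the t
   Blaschke factors coming from the other points of that square is at most
   1/2, so |B(P ++ W, x)| <= 2^-t = O(1 / (n u^2)) = O(u^2). *)

Lemma sup_ge0 (R : realType) (S : set R) : (forall r, S r -> 0 <= r) -> 0 <= sup S.
Proof.
move=> S0; have [[[r Sr] ubS]|noS] := pselect (has_sup S); last by rewrite sup_out.
exact: le_trans (S0 r Sr) (ub_le_sup ubS Sr).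
Qed.

Lemma exists_ub_seq (R : realDomainType) (T : eqType) (f : T -> R) (s : seq T) :
  exists c, 0 <= c /\ {in s, forall x, f x <= c}.
Proof.
exists (\sum_(x <- s) `|f x|); split=> [|x xs]; first exact: sumr_ge0.
rewrite (big_rem x xs) /=; apply: le_trans (ler_norm _) _.
by rewrite lerDl sumr_ge0.
Qed.

Section Modulus.
Variable R : rcfType.
Implicit Types x y z : R[i].

Lemma normC_cabs z : `|z| = (cabs z)%:C%C.
Proof. by rewrite /cabs normc_def. Qed.

Lemma cabs_ge0 z : 0 <= cabs z.
Proof. by rewrite -lecR rmorph0 -normC_cabs. Qed.

Lemma cabs_eq0 z : (cabs z == 0) = (z == 0).
Proof. by rewrite -(inj_eq (@complexI _)) -normC_cabs normr_eq0. Qed.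

Lemma cabs_gt0 z : (0 < cabs z) = (z != 0).
Proof. by rewrite lt_def cabs_ge0 cabs_eq0 andbT. Qed.

Lemma cabs1 : cabs (1 : R[i]) = 1.
Proof. by apply: complexI; rewrite -normC_cabs normr1. Qed.

Lemma cabsM x y : cabs (x * y) = cabs x * cabs y.
Proof. by apply: complexI; rewrite rmorphM -!normC_cabs normrM. Qed.

Lemma cabsV x : cabs x^-1 = (cabs x)^-1.
Proof. by apply: complexI; rewrite fmorphV -!normC_cabs normfV. Qed.

Lemma cabsN x : cabs (- x) = cabs x.
Proof. by apply: complexI; rewrite -!normC_cabs normrN. Qed.

Lemma cabsJ z : cabs z^* = cabs z.
Proof. by apply: complexI; rewrite -!normC_cabs norm_conjC. Qed.

Lemma cabs_distrC x y : cabs (x - y) = cabs (y - x).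
Proof. by rewrite -cabsN opprB. Qed.

Lemma ler_cabsD x y : cabs (x + y) <= cabs x + cabs y.
Proof. by rewrite -lecR rmorphD -!normC_cabs ler_normD. Qed.

Lemma cabs_prod (s : seq R[i]) (F : R[i] -> R[i]) :
  cabs (\prod_(w <- s) F w) = \prod_(w <- s) cabs (F w).
Proof. exact: (big_morph _ cabsM cabs1). Qed.

Lemma cabs_Re z : `|complex.Re z| <= cabs z.
Proof.
rewrite /cabs normc_def /= -(sqrtr_sqr (complex.Re z)) ler_wsqrtr //.
by rewrite lerDl sqr_ge0.
Qed.

Lemma cabs_Im z : `|complex.Im z| <= cabs z.
Proof.
rewrite /cabs normc_def /= -(sqrtr_sqr (complex.Im z)) ler_wsqrtr //.
by rewrite lerDr sqr_ge0.
Qed.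

Lemma cabs_le_ReIm z : cabs z <= `|complex.Re z| + `|complex.Im z|.
Proof.
set s := `|complex.Re z| + `|complex.Im z|.
have s_ge0 : 0 <= s by rewrite addr_ge0.
rewrite /cabs normc_def /= -(ger0_norm s_ge0) -(sqrtr_sqr s) ler_wsqrtr //.
rewrite sqrrD !real_normK ?num_real // lerD2r lerDl.
by rewrite mulrn_wge0 ?mulr_ge0.
Qed.

End Modulus.

Section BlaschkeFactor.
Variable R : rcfType.
Implicit Types (w x z : R[i]) (A Y : seq R[i]).

Definition bfactor w z : R[i] := (z - w) / (1 - w^* * z).

Lemma blaschke_cons w Y z : blaschke (w :: Y) z = bfactor w z * blaschke Y z.
Proof. by rewrite /blaschke big_cons. Qed.

Lemma Bq_cons A w Y z : Bq A (w :: Y) z = bfactor w z * Bq A Y z.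
Proof. by rewrite /Bq blaschke_cons mulrA. Qed.

Lemma Bq_perm A Y Y' z : perm_eq Y Y' -> Bq A Y z = Bq A Y' z.
Proof. by move=> pY; rewrite /Bq /blaschke (perm_big _ pY). Qed.

Lemma Bq_rcons A Y w z : Bq A (rcons Y w) z = Bq A Y z * bfactor w z.
Proof. by rewrite (@Bq_perm _ _ (w :: Y)) ?perm_rcons // Bq_cons mulrC. Qed.

Lemma cabs_bfactorC w z : cabs (bfactor w z) = cabs (bfactor z w).
Proof.
rewrite /bfactor !cabsM !cabsV cabs_distrC; congr (_ * _^-1).
by rewrite -cabsJ rmorphB rmorph1 rmorphM /= conjCK mulrC.
Qed.

Lemma cabs_bfactor_den_ge w z : 1 - cabs w * cabs z <= cabs (1 - w^* * z).
Proof.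
have := ler_cabsD (1 - w^* * z) (w^* * z).
by rewrite subrK cabs1 cabsM cabsJ; lra.
Qed.

Lemma cabs_bfactor_den_gt0 w z : cabs w < 1 -> cabs z < 1 ->
  0 < cabs (1 - w^* * z).
Proof.
move=> w1 z1; apply: lt_le_trans (cabs_bfactor_den_ge w z).
by rewrite subr_gt0 mulr_ilt1 ?cabs_ge0.
Qed.

Lemma cabs_bfactor_id w z :
  cabs (1 - w^* * z) ^+ 2 - cabs (z - w) ^+ 2
  = (1 - cabs z ^+ 2) * (1 - cabs w ^+ 2).
Proof.
have e : `|1 - w^* * z| ^+ 2 - `|z - w| ^+ 2 = (1 - `|z| ^+ 2) * (1 - `|w| ^+ 2).
  by rewrite !normCK !rmorphB !rmorphM rmorph1 /= conjCK; ring.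
rewrite !normC_cabs -!rmorphXn -!rmorphB -rmorphM in e.
exact: complexI e.
Qed.

Lemma cabs_bfactor_le1 w z : cabs w < 1 -> cabs z < 1 -> cabs (bfactor w z) <= 1.
Proof.
move=> w1 z1; have den_gt0 := cabs_bfactor_den_gt0 w1 z1.
rewrite /bfactor cabsM cabsV ler_pdivrMr // mul1r.
have := cabs_bfactor_id w z.
have : 0 <= (1 - cabs z ^+ 2) * (1 - cabs w ^+ 2).
  by rewrite mulr_ge0 // subr_ge0 exprn_ile1 ?cabs_ge0 // ltW.
have := cabs_ge0 (z - w); have := cabs_ge0 (1 - w^* * z); nra.
Qed.

Lemma cabs_bfactor_le w z : cabs w < 1 -> cabs z < 1 ->
  cabs (bfactor w z) <= cabs (z - w) / (1 - cabs w * cabs z).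
Proof.
move=> w1 z1; rewrite /bfactor cabsM cabsV ler_wpM2l ?cabs_ge0 //.
rewrite lef_pV2 ?posrE ?cabs_bfactor_den_ge ?cabs_bfactor_den_gt0 //.
by rewrite subr_gt0 mulr_ilt1 ?cabs_ge0.
Qed.

Lemma cabs_blaschke_le_count (p : pred R[i]) Y z :
  cabs z < 1 -> {in Y, forall w, cabs w < 1} ->
  {in Y, forall w, p w -> cabs (bfactor w z) <= 2^-1} ->
  cabs (blaschke Y z) <= 2^-1 ^+ count p Y.
Proof.
move=> z1; elim: Y => [|w Y IH] Y1 Yp; first by rewrite /blaschke big_nil cabs1.
have w1 : cabs w < 1 by apply: Y1; rewrite mem_head.
have {}IH : cabs (blaschke Y z) <= 2^-1 ^+ count p Y.
  by apply: IH => v vY; [apply: Y1|apply: Yp]; rewrite in_cons vY orbT.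
rewrite blaschke_cons cabsM /=; case pw: (p w); rewrite ?(add1n, add0n, exprS).
  by rewrite ler_pM ?cabs_ge0 // Yp ?mem_head.
by rewrite -[leRHS]mul1r ler_pM ?cabs_ge0 ?cabs_bfactor_le1.
Qed.

Lemma cabs_blaschke_le1 Y z : cabs z < 1 -> {in Y, forall w, cabs w < 1} ->
  cabs (blaschke Y z) <= 1.
Proof.
move=> z1 Y1.
by have := @cabs_blaschke_le_count pred0 Y z z1 Y1; rewrite count_pred0 expr0; apply.
Qed.

End BlaschkeFactor.

Section QBounds.
Variable R : rcfType.
Implicit Types (a w x z : R[i]) (A Y : seq R[i]).

Definition qbound A : R := \prod_(a <- A) (1 + cabs a).

Lemma qbound_ge1 A : 1 <= qbound A.
Proof.
rewrite /qbound; elim: A => [|a A IH]; first by rewrite big_nil.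
by rewrite big_cons mulr_ege1 // lerDl cabs_ge0.
Qed.

Lemma cabs_sub_le z a : cabs z < 1 -> cabs (z - a) <= 1 + cabs a.
Proof. by move=> z1; apply: le_trans (ler_cabsD _ _) _; rewrite cabsN lerD2r ltW. Qed.

Lemma cabs_qpoly_le A z : cabs z < 1 -> cabs (Defs.qpoly A z) <= qbound A.
Proof.
move=> z1; rewrite /Defs.qpoly cabs_prod /qbound.
by apply: ler_prod => a _; rewrite cabs_ge0 cabs_sub_le.
Qed.

Lemma cabs_qpoly_le_dist A a z : a \in A -> cabs z < 1 ->
  cabs (Defs.qpoly A z) <= cabs (z - a) * qbound A.
Proof.
move=> aA z1; rewrite /Defs.qpoly /qbound !(big_rem a aA) /= -/(Defs.qpoly _ z) -/(qbound _).
rewrite cabsM mulrA ler_pM ?cabs_ge0 ?cabs_qpoly_le //.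
by rewrite ler_peMr ?cabs_ge0 // lerDl cabs_ge0.
Qed.

Lemma cabs_Bq_le_qpoly A Y z : cabs z < 1 -> {in Y, forall w, cabs w < 1} ->
  cabs (Bq A Y z) <= cabs (Defs.qpoly A z).
Proof.
move=> z1 Y1; rewrite /Bq cabsM -[leRHS]mul1r.
by rewrite ler_wpM2r ?cabs_ge0 ?cabs_blaschke_le1.
Qed.

Lemma Bq_neq0 A Y x : {in A, forall a, cabs a = 1} -> cabs x < 1 ->
  {in Y, forall w, cabs w < 1} -> x \notin Y -> Bq A Y x != 0.
Proof.
move=> A1 x1 Y1 xY; rewrite /Bq mulf_neq0 //.
  rewrite /blaschke prodf_seq_neq0; apply/allP => w wY /=.
  rewrite mulf_neq0 ?invr_neq0 //; first by rewrite subr_eq0; apply: contraNneq xY => ->.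
  by rewrite -cabs_gt0 cabs_bfactor_den_gt0 // Y1.
rewrite /Defs.qpoly prodf_seq_neq0; apply/allP => a aA /=.
by rewrite subr_eq0; apply: contraTneq x1 => ->; rewrite A1 ?ltxx.
Qed.

End QBounds.

Section Vfrom.
Variable R : rcfType.
Variable A : seq R[i].
Implicit Types (x y : R[i]) (P W Y Z : seq R[i]).

(* [Vfrom Y W] is the product of the [|B_q|] of each point of [W] against [Y]
   and the points of [W] preceding it, so that [V(Y ++ W) = V(Y) * Vfrom Y W]. *)
Fixpoint Vfrom Y W : R :=
  if W is x :: W' then cabs (Bq A Y x) * Vfrom (rcons Y x) W' else 1.

Lemma Vfrom_ge0 Y W : 0 <= Vfrom Y W.
Proof. by elim: W Y => [|x W IH] Y //=; rewrite mulr_ge0 ?cabs_ge0. Qed.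

Lemma Vfrom_prod Y W :
  \prod_(j < size W) cabs (Bq A (Y ++ take j W) (nth 0 W j)) = Vfrom Y W.
Proof.
elim: W Y => [|x W IH] Y /=; first by rewrite big_ord0.
rewrite big_ord_recl /= cats0 -IH; congr (_ * _).
by apply: eq_bigr => j _; rewrite /= cat_rcons.
Qed.

Lemma Vpts_Vfrom Z : Vpts A Z = Vfrom [::] Z.
Proof. by rewrite /Vpts -Vfrom_prod. Qed.

Lemma Vfrom_perm Y Y' W : perm_eq Y Y' -> Vfrom Y W = Vfrom Y' W.
Proof.
elim: W Y Y' => [|x W IH] Y Y' pY //=.
by rewrite (Bq_perm _ _ pY) (IH _ (rcons Y' x)) // -!cats1 perm_cat2r.
Qed.

(* The symmetry [|b_x(y)| = |b_y(x)|] of Blaschke factors makes [V] symmetric. *)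
Lemma Vfrom_swap Y x y W : Vfrom Y [:: x, y & W] = Vfrom Y [:: y, x & W].
Proof.
have pY : perm_eq (rcons (rcons Y x) y) (rcons (rcons Y y) x).
  by rewrite -!cats1 -!catA perm_cat2l perm_catC.
rewrite /= !Bq_rcons (cabsM (Bq A Y y)) (cabsM (Bq A Y x)) (cabs_bfactorC x y).
by rewrite (Vfrom_perm W pY); ring.
Qed.

Lemma Vfrom_cons_rcons Y x W : Vfrom Y (x :: W) = Vfrom Y (rcons W x).
Proof.
elim: W Y => [|w W IH] Y //.
by rewrite Vfrom_swap rcons_cons [in RHS]/= -IH.
Qed.

Lemma Vfrom_rcons Y W x : Vfrom Y (rcons W x) = Vfrom Y W * cabs (Bq A (Y ++ W) x).
Proof.
elim: W Y => [|w W IH] Y /=; first by rewrite cats0 mulr1 mul1r.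
by rewrite IH cat_rcons mulrA.
Qed.

Lemma Vfrom_cat Y P W : Vfrom Y (P ++ W) = Vfrom Y P * Vfrom (Y ++ P) W.
Proof.
elim: P Y => [|x P IH] Y /=; first by rewrite cats0 mul1r.
by rewrite IH cat_rcons mulrA.
Qed.

Lemma Vpts_cat_cons P x W :
  Vpts A (P ++ x :: W) = Vpts A (P ++ W) * cabs (Bq A (P ++ W) x).
Proof.
by rewrite !Vpts_Vfrom !Vfrom_cat Vfrom_cons_rcons Vfrom_rcons mulrA.
Qed.

Lemma Vfrom_gt0 Y W : {in A, forall a, cabs a = 1} ->
  {in Y ++ W, forall w, cabs w < 1} -> uniq (Y ++ W) -> 0 < Vfrom Y W.
Proof.
move=> A1; elim: W Y => [|x W IH] Y YW1 uYW //=.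
rewrite -cat_rcons in YW1 uYW; rewrite mulr_gt0 ?IH // cabs_gt0 Bq_neq0 //.
- by apply: YW1; rewrite mem_cat mem_rcons mem_head.
- by move=> w wY; apply: YW1; rewrite mem_cat mem_rcons in_cons wY orbT.
- by move: uYW; rewrite cat_uniq rcons_uniq => /andP[/andP[]].
Qed.

End Vfrom.

Section Pigeonhole.
Variables (T U : eqType) (f : T -> U) (cells : seq U).
Hypothesis cells_uniq : uniq cells.

Lemma sum_count_cells (s : seq T) : {in s, forall y, f y \in cells} ->
  (\sum_(c <- cells) count (fun y => f y == c) s)%N = size s.
Proof.
elim: s => [|x s IH] fs /=; first by rewrite big1.
have fx : f x \in cells by apply: fs; rewrite mem_head.
rewrite big_split /= IH => [|y ys]; last by apply: fs; rewrite in_cons ys orbT.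
rewrite (big_rem (f x)) //= eqxx big1_seq ?addn0 // => c /andP[_ c_rem].
by apply/eqP; rewrite eqb0; apply: contraTneq c_rem => <-; rewrite mem_rem_uniqF.
Qed.

Lemma pigeonhole_count (s : seq T) : {in s, forall y, f y \in cells} -> s != [::] ->
  exists2 x, x \in s & (size s <= size cells * count (fun y => f y == f x) s)%N.
Proof.
move=> fs s0; pose N c := count (fun y => f y == c) s.
have [/hasP[x xs hx]|/hasPn small] :=
  boolP (has (fun x => size s <= size cells * N (f x))%N s); first by exists x.
have small_cell c : c \in cells -> (size cells * N c < size s)%N.
  move=> _; have [/hasP[y ys /eqP <-]|/hasPn none] := boolP (has (fun y => f y == c) s).
    by rewrite ltnNge small.
  by rewrite /N (eq_in_count (a2 := pred0)) ?count_pred0 ?muln0 ?lt0n ?size_eq0 // => y /none /negbTE.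
have : (\sum_(c <- cells) (size cells * N c + 1) <= \sum_(c <- cells) size s)%N.
  rewrite big_seq_cond [leqRHS]big_seq_cond leq_sum // => c /andP[/small_cell].
  by rewrite addn1.
rewrite big_split /= -big_distrr sum_count_cells // sum1_size.
rewrite big_const_seq count_predT iter_addn_0 mulnC -[leqRHS]addn0 leq_add2l leqn0 size_eq0.
have [x xs] : exists x, x \in s by case: (s) s0 => // x ? _; exists x; rewrite mem_head.
by move/eqP=> cells0; have := fs x xs; rewrite cells0.
Qed.

End Pigeonhole.

Section Grid.
Variable R : realType.
Implicit Types (a b h x y : R) (w z : R[i]).

Lemma truncn_eq_dist x y : 0 <= x -> 0 <= y -> Num.truncn x = Num.truncn y ->
  `|x - y| < 1.
Proof.
move=> x0 y0 exy; have /andP[x1 x2] := truncn_itv x0.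
have /andP[y1 y2] := truncn_itv y0.
rewrite exy in x1 x2; rewrite -natr1 in x2 y2.
by rewrite ltr_norml; apply/andP; split; lra.
Qed.

Definition grid_index h a : nat := Num.truncn ((a + 1) / h).

Definition grid_cell h z : nat * nat :=
  (grid_index h (complex.Re z), grid_index h (complex.Im z)).

Definition grid_cells h : seq (nat * nat) :=
  let L := (Num.truncn (2 / h)).+1 in [seq (i, j) | i <- iota 0 L, j <- iota 0 L].

Lemma grid_index_lt h a : 0 < h -> `|a| < 1 ->
  (grid_index h a < (Num.truncn (2 / h)).+1)%N.
Proof.
move=> h0; rewrite ltr_norml ltnS => /andP[a1 a2].
by apply: le_truncn; rewrite ler_pM2r ?invr_gt0 //; lra.
Qed.

Lemma grid_index_dist h a b : 0 < h -> `|a| < 1 -> `|b| < 1 ->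
  grid_index h a = grid_index h b -> `|a - b| < h.
Proof.
move=> h0 /ltr_normlP[a1 _] /ltr_normlP[b1 _] /truncn_eq_dist.
rewrite -mulrBl normrM normfV (gtr0_norm h0) ltr_pdivrMr // mul1r.
by rewrite opprD addrACA subrr addr0; apply; rewrite divr_ge0 ?ltW //; lra.
Qed.

Lemma grid_cell_dist h z w : 0 < h -> cabs z < 1 -> cabs w < 1 ->
  grid_cell h z = grid_cell h w -> cabs (z - w) < 2 * h.
Proof.
move=> h0 z1 w1 [eRe eIm].
have dRe := grid_index_dist h0 (le_lt_trans (cabs_Re z) z1) (le_lt_trans (cabs_Re w) w1) eRe.
have dIm := grid_index_dist h0 (le_lt_trans (cabs_Im z) z1) (le_lt_trans (cabs_Im w) w1) eIm.
apply: le_lt_trans (cabs_le_ReIm _) _; rewrite !raddfB /=; lra.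
Qed.

Lemma grid_cells_uniq h : uniq (grid_cells h).
Proof. by apply: allpairs_uniq => [||[? ?] [? ?]] //; exact: iota_uniq. Qed.

Lemma size_grid_cells h :
  size (grid_cells h) = ((Num.truncn (2 / h)).+1 * (Num.truncn (2 / h)).+1)%N.
Proof. by rewrite size_allpairs size_iota. Qed.

Lemma grid_cell_mem h z : 0 < h -> cabs z < 1 -> grid_cell h z \in grid_cells h.
Proof.
move=> h0 z1; apply: (allpairs_f (fun i j => (i, j))); rewrite mem_iota add0n.
  exact/grid_index_lt/(le_lt_trans (cabs_Re z)).
exact/grid_index_lt/(le_lt_trans (cabs_Im z)).
Qed.

(* Cells of side [u / 4] have diameter below [u / 2], while the denominator of
   [b_w] is at least [u] when [|w| <= 1 - u]. *)
Lemma cabs_bfactor_same_cell u w z : 0 < u -> cabs z < 1 -> cabs w <= 1 - u ->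
  grid_cell (u / 4) z = grid_cell (u / 4) w -> cabs (bfactor w z) <= 2^-1.
Proof.
move=> u0 z1 wu ezw; have w1 : cabs w < 1 by lra.
have dzw := grid_cell_dist (divr_gt0 u0 (ltr0Sn _ 3)) z1 w1 ezw.
apply: le_trans (cabs_bfactor_le w1 z1) _.
have den : u <= 1 - cabs w * cabs z.
  by have := cabs_ge0 w; have := cabs_ge0 z; nra.
by rewrite ler_pdivrMr; lra.
Qed.

End Grid.

Section CompactInDisc.
Variable R : realType.

Lemma continuous_cabs : continuous (@cabs R : R[i]^o -> R).
Proof.
move=> z; apply/(cvgrPdist_lt (FF := nbhs_filter (z : R[i]^o))) => e e0.
have e0C : (0 : R[i]) < e%:C%C by rewrite ltcR.
apply: filterS (@near_ball _ R[i]^o z _ e0C) => w.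
rewrite -ball_normE /= normC_cabs ltcR; apply: le_lt_trans.
rewrite ler_norml; apply/andP; split.
  by have := ler_cabsD (w - z) z; rewrite subrK cabs_distrC; lra.
by have := ler_cabsD (z - w) w; rewrite subrK; lra.
Qed.

Lemma compact_in_disc_radius (K : set R[i]) :
  compact (K : set R[i]^o) -> K `<=` @unit_disc R ->
  exists r : R, [/\ 0 <= r, r < 1 & forall z, K z -> cabs z <= r].
Proof.
move=> cK K1; have [-> | /set0P[z0 Kz0]] := eqVneq K set0; first by exists 0; split.
have K0 : (K : set R[i]^o) !=set0 by exists z0.
have [z Kz zmax] := compact_EVT_max K0 cK (continuous_subspaceT continuous_cabs).
rewrite inE in Kz; exists (cabs z); split; [exact: cabs_ge0|exact: K1|].
by move=> w Kw; apply: zmax; rewrite inE.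
Qed.

End CompactInDisc.

Section Extremal.
Variable R : realType.
Variables (A : seq R[i]) (E : set R[i]).
Hypothesis E_disc : E `<=` @unit_disc R.
Implicit Types (x z : R[i]) (P W Z : seq R[i]).

Lemma tuples_in_disc n Z : tuples_in E n Z -> {in Z, forall w, cabs w < 1}.
Proof. by move=> [_ ZE] w /ZE /E_disc. Qed.

Lemma Vpts_le_pow Z : {in Z, forall w, cabs w < 1} -> Vpts A Z <= qbound A ^+ size Z.
Proof.
move=> Z1; have -> : qbound A ^+ size Z = \prod_(j < size Z) qbound A.
  by rewrite prodr_const card_ord.
apply: ler_prod => j _; rewrite cabs_ge0 /=.
have jZ : nth 0 Z j \in Z by rewrite mem_nth.
apply: le_trans (cabs_Bq_le_qpoly _ _ _) (cabs_qpoly_le _ _); rewrite ?Z1 //.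
by move=> w /mem_take /Z1.
Qed.

Lemma Vn_has_ubound n : has_ubound [set Vpts A Z | Z in tuples_in E n].
Proof.
exists (qbound A ^+ n) => _ [Z tZ <-]; case: (tZ) => <- _.
exact: Vpts_le_pow (tuples_in_disc tZ).
Qed.

Lemma Vn_gt0 n : infinite_set E -> {in A, forall a, cabs a = 1} -> 0 < Vn A E n.
Proof.
move=> Einf A1; have [B BE nB] := infinite_set_fset n Einf.
pose Z := take n (finmap.enum_fset B).
have tZ : tuples_in E n Z by split=> [|w /mem_take /BE]; rewrite ?size_takel.
apply: lt_le_trans (ub_le_sup (Vn_has_ubound n) _); last by exists Z.
rewrite Vpts_Vfrom Vfrom_gt0 //; first exact: tuples_in_disc tZ.
by rewrite take_uniq ?finmap.fset_uniq.
Qed.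

(* Exchanging [x] for [z] changes [V] only through the last factor
   [|B_q(P ++ W, .)|], and [V(P ++ x :: W)] is maximal. *)
Lemma cabs_Bq_le_extremal n P x W z :
  tuples_in E n (P ++ x :: W) -> Vpts A (P ++ x :: W) = Vn A E n ->
  0 < Vn A E n -> E z -> cabs (Bq A (P ++ x :: W) z) <= cabs (Bq A (P ++ W) x).
Proof.
move=> [nZ ZE] VZ Vn0 Ez.
have tZz : tuples_in E n (P ++ z :: W).
  split=> [|y]; first by rewrite -nZ !size_cat.
  rewrite !mem_cat !in_cons => /or3P[yP|/eqP->//|yW]; apply: ZE.
    by rewrite mem_cat yP.
  by rewrite mem_cat in_cons yW !orbT.
have : Vpts A (P ++ z :: W) <= Vpts A (P ++ x :: W).
  by rewrite VZ; apply: ub_le_sup; [exact: Vn_has_ubound | exists (P ++ z :: W)].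
rewrite -VZ !Vpts_cat_cons in Vn0 *.
have V0 : 0 < Vpts A (P ++ W).
  rewrite lt_def Vpts_Vfrom Vfrom_ge0 andbT -Vpts_Vfrom.
  by apply: contraTneq Vn0 => ->; rewrite mul0r ltxx.
rewrite ler_pM2l //.
apply: le_trans; rewrite (@Bq_perm _ _ _ (x :: P ++ W)); last first.
  by rewrite -cat1s perm_catCA.
rewrite Bq_cons cabsM ler_piMl ?cabs_ge0 // cabs_bfactor_le1 //; last exact: E_disc.
by apply: E_disc; apply: ZE; rewrite mem_cat mem_head orbT.
Qed.

Lemma Mpts_ge0 Z : 0 <= Mpts A E Z.
Proof. by apply: sup_ge0 => _ [z _ <-]; exact: cabs_ge0. Qed.

Lemma Mn_le_removal n b : infinite_set E -> {in A, forall a, cabs a = 1} -> 0 <= b ->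
  (forall Z, tuples_in E n Z -> Vpts A Z = Vn A E n ->
     exists P x W, Z = P ++ x :: W /\ cabs (Bq A (P ++ W) x) <= b) ->
  Mn A E n <= b.
Proof.
move=> Einf A1 b0 removal; rewrite /Mn.
have [[Z [tZ VZ]]|none] := pselect (exists Z, tuples_in E n Z /\ Vpts A Z = Vn A E n).
  apply: (@le_trans _ _ (Mpts A E Z)).
    by apply: ge_inf; [exists 0 => _ [Z' _ <-]; exact: Mpts_ge0 | exists Z].
  have [P [x [W [eZ Bx]]]] := removal Z tZ VZ; subst Z.
  apply: ge_sup => [|_ [z Ez <-]].
    by exists (cabs (Bq A (P ++ x :: W) x)), x => //; apply: tZ.2; rewrite mem_cat mem_head orbT.
  exact: le_trans (cabs_Bq_le_extremal tZ VZ (Vn_gt0 n Einf A1) Ez) Bx.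
(* No tuple attains [V_n(E)]: the infimum is over the empty set and [inf set0 = 0]. *)
rewrite (_ : [set _ | _ in _] = set0) ?inf0 //.
by apply/seteqP; split=> // y [Z ? _]; apply: none; exists Z.
Qed.

End Extremal.

Section Removal.
Variable R : realType.
Implicit Types (u : R) (a x : R[i]) (A P W Y Z : seq R[i]).

Lemma sub_cat_cons P x W : {subset P ++ W <= P ++ x :: W}.
Proof. by move=> w; rewrite !mem_cat in_cons => /orP[]->; rewrite ?orbT. Qed.

Lemma cabs_Bq_le_stolz A Y a (c : R) u x : a \in A -> 0 <= c -> stolz a c x ->
  1 - u < cabs x -> {in Y, forall w, cabs w < 1} ->
  cabs (Bq A Y x) <= c * u * qbound A.
Proof.
move=> aA c0 [x1 xa] xu Y1.
apply: le_trans (cabs_Bq_le_qpoly _ x1 Y1) _.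
apply: le_trans (cabs_qpoly_le_dist aA x1) _.
rewrite ler_wpM2r ?(le_trans ler01 (qbound_ge1 _)) //.
by apply: le_trans xa _; rewrite ler_wpM2l // ltW // ltrBlDr -ltrBlDl.
Qed.

Lemma expr_half_le (t : nat) : 2^-1 ^+ t <= 2 / t.+1%:R :> R.
Proof.
rewrite exprVn -div1r ler_pdivrMr ?exprn_gt0 // mulrAC ler_pdivlMr ?ltr0n //.
by rewrite mul1r -exprS -natrX ler_nat ltnW // ltn_expl.
Qed.

(* [2^-t <= 2 / (t + 1) <= 2 L^2 / n = 2 (L u)^2 u^2 <= 162 u^2]. *)
Lemma grid_count_bound u (n L t : nat) : 0 < u -> u <= 1 -> n%:R * u ^+ 4 = 1 ->
  (n <= L * L * t.+1)%N -> L%:R * u <= 9 -> 2^-1 ^+ t <= 162 * u.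
Proof.
move=> u0 u1 nu nL Lu; apply: le_trans (expr_half_le t) _.
have t0 : (0 : R) < t.+1%:R by rewrite ltr0n.
have nLt : 1 <= (L%:R * u) ^+ 2 * u ^+ 2 * t.+1%:R.
  have -> : (L%:R * u) ^+ 2 * u ^+ 2 * t.+1%:R = (L * L * t.+1)%:R * u ^+ 4.
    by rewrite !natrM; ring.
  by rewrite -[leLHS]nu ler_wpM2r ?ler_nat // exprn_ge0 // ltW.
have Lu2 : (L%:R * u) ^+ 2 <= 9 ^+ 2.
  by rewrite ler_pXn2r // ?nnegrE ?mulr_ge0 ?ler0n // ltW.
have u2 : u ^+ 2 <= u by rewrite expr2 ler_piMr // ltW.
have := ler_pM (sqr_ge0 _) (sqr_ge0 _) Lu2 u2.
rewrite ler_pdivrMr //; nra.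
Qed.

Lemma grid_side_count_le u : 0 < u -> u <= 1 ->
  (Num.truncn (2 / (u / 4))).+1%:R * u <= 9.
Proof.
move=> u0 u1; rewrite -natr1 mulrDl mul1r.
have -> : 2 / (u / 4) = 8 / u by field; rewrite gt_eqF.
have ht : (Num.truncn (8 / u))%:R <= 8 / u by rewrite truncn_le divr_ge0 ?ltW.
have := ler_wpM2r (ltW u0) ht; rewrite mulfVK ?gt_eqF //; lra.
Qed.

Lemma interior_removal u Z : 0 < u -> u <= 1 -> (size Z)%:R * u ^+ 4 = 1 ->
  {in Z, forall x, cabs x <= 1 - u} ->
  exists P x W, Z = P ++ x :: W /\ cabs (blaschke (P ++ W) x) <= 162 * u.
Proof.
move=> u0 u1 nu Zu; have Z1 : {in Z, forall x, cabs x < 1} by move=> x /Zu; lra.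
have h0 : 0 < u / 4 by rewrite divr_gt0.
have Z0 : Z != [::] by apply: contra_eq_neq nu => ->; rewrite mul0r eq_sym oner_eq0.
have [x xZ nZ] := pigeonhole_count (grid_cells_uniq (u / 4))
  (fun y yZ => grid_cell_mem h0 (Z1 y yZ)) Z0.
have [P [W eZ]] : exists P W, Z = P ++ x :: W.
  by case/splitPr: xZ => P W; exists P, W.
subst Z; exists P, x, W; split => //.
pose p y := grid_cell (u / 4) y == grid_cell (u / 4) x.
have cnt : count p (P ++ x :: W) = (count p (P ++ W)).+1.
  by rewrite !count_cat /= /p eqxx add1n addnS.
rewrite size_grid_cells cnt in nZ.
have PWZ : {subset P ++ W <= P ++ x :: W} by exact: sub_cat_cons.
have PW1 : {in P ++ W, forall w, cabs w < 1} by move=> w /PWZ /Z1.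
have same_cell : {in P ++ W, forall w, p w -> cabs (bfactor w x) <= 2^-1}.
  by move=> w /PWZ wZ /eqP pw; exact: cabs_bfactor_same_cell u0 (Z1 x xZ) (Zu w wZ) (esym pw).
apply: le_trans (cabs_blaschke_le_count (Z1 x xZ) PW1 same_cell) _.
exact: grid_count_bound u0 u1 nu nZ (grid_side_count_le u0 u1).
Qed.

End Removal.

Section StolzCover.
Variable R : realType.
Variables (A : seq R[i]) (E K : set R[i]) (S : seq (R[i] * R)) (r c : R).
Hypotheses (E_disc : E `<=` @unit_disc R) (r_ge0 : 0 <= r).
Hypothesis K_radius : forall z, K z -> cabs z <= r.
Hypotheses (c_ge0 : 0 <= c) (S_stolz : forall s, s \in S -> s.1 \in A /\ 0 <= s.2 <= c).
Hypothesis E_cover : E `<=` K `|` \bigcup_(s in [set s | s \in S]) stolz s.1 s.2.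

Lemma exists_small_removal u Z : 0 < u -> u <= 1 - r ->
  (size Z)%:R * u ^+ 4 = 1 -> {in Z, forall z, E z} ->
  exists P x W, Z = P ++ x :: W /\ cabs (Bq A (P ++ W) x) <= (c + 162) * qbound A * u.
Proof.
move=> u0 ur nu ZE; have Z1 : {in Z, forall z, cabs z < 1} by move=> z /ZE /E_disc.
have q0 : 0 < qbound A by apply: lt_le_trans ltr01 (qbound_ge1 A).
have [/hasP[x xZ xu]|/hasPn Zu] := boolP (has (fun x => 1 - u < cabs x) Z).
  have [P [W eZ]] : exists P W, Z = P ++ x :: W.
    by case/splitPr: xZ => P W; exists P, W.
  exists P, x, W; split => //.
  have [Kx|[s /S_stolz[sA /andP[s0 sc]] xs]] := E_cover (ZE x xZ).
    by have := K_radius Kx; lra.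
  have PW1 : {in P ++ W, forall w, cabs w < 1} by rewrite eZ in Z1; move=> w /sub_cat_cons /Z1.
  apply: le_trans (cabs_Bq_le_stolz sA s0 xs xu PW1) _.
  by rewrite mulrAC !ler_pM2r //; lra.
have u1 : u <= 1 by apply: le_trans ur _; rewrite gerBl.
have {}Zu : {in Z, forall x, cabs x <= 1 - u} by move=> x /Zu; rewrite -leNgt.
have [P [x [W [eZ Bx]]]] := interior_removal u0 u1 nu Zu.
exists P, x, W; split => //.
have x1 : cabs x < 1 by apply: Z1; rewrite eZ mem_cat mem_head orbT.
rewrite /Bq cabsM mulrAC ler_pM ?cabs_ge0 ?cabs_qpoly_le //.
by apply: le_trans Bx _; rewrite ler_pM2r // ler_wpDl.
Qed.

End StolzCover.

Section QuarterRoot.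
Variable R : realType.

Lemma powR_quarterK (x : R) : 0 < x -> (x `^ (- 4^-1)) ^+ 4 = x^-1.
Proof.
move=> x0; rewrite -powR_mulrn ?powR_ge0 // -powRrM.
by rewrite mulNr mulVf // powR_inv1 // ltW.
Qed.

Lemma powR_quarter_le (x d : R) : 0 < d -> (d ^+ 4)^-1 <= x -> x `^ (- 4^-1) <= d.
Proof.
move=> d0 dx; have x0 : 0 < x by apply: lt_le_trans dx; rewrite invr_gt0 exprn_gt0.
have : (x `^ (- 4^-1)) ^+ 4 <= d ^+ 4.
  by rewrite powR_quarterK // -[d ^+ 4]invrK lef_pV2 ?posrE ?invr_gt0 ?exprn_gt0.
by rewrite ler_pXn2r // nnegrE ?powR_ge0 // ltW.
Qed.

Lemma quarter_root_bounds (r : R) (n : nat) : r < 1 ->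
  (Num.truncn ((1 - r) ^+ 4)^-1 < n)%N ->
  [/\ 0 < n%:R `^ (- 4^-1) :> R, n%:R * (n%:R `^ (- 4^-1)) ^+ 4 = 1 :> R
    & n%:R `^ (- 4^-1) <= 1 - r].
Proof.
move=> r1 rn; have nr : ((1 - r) ^+ 4)^-1 < n%:R.
  by apply: lt_le_trans (truncnS_gt _) _; rewrite ler_nat.
have n0 : 0 < n%:R :> R by apply: le_lt_trans nr; rewrite invr_ge0 exprn_ge0 // subr_ge0 ltW.
split; first exact: powR_gt0.
  by rewrite powR_quarterK // mulfV ?gt_eqF.
by apply: powR_quarter_le (ltW nr); rewrite subr_gt0.
Qed.

End QuarterRoot.

Theorem proposition5p1 (R : realType) (E : set R[i]) (A : seq R[i]) :
  E `<=` @unit_disc R ->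
  infinite_set E ->
  uniq A ->
  closure (E : set R[i]^o) `&` @unit_circle R = [set a | a \in A] ->
  (exists (S : seq (R[i] * R)) (K : set R[i]),
      [/\ compact (K : set R[i]^o), K `<=` @unit_disc R,
          (forall s, s \in S -> s.1 \in A /\ 1 < s.2) &
          E `<=` K `|` \bigcup_(s in [set s | s \in S]) stolz s.1 s.2]) ->
  exists (sigma C : R) (N : nat),
    [/\ 0 < sigma, 0 < C &
        forall n : nat, (N <= n)%N -> Mn A E n <= C * (n%:R `^ (- sigma))].
Proof.
(* The vertices need not be distinct: only [|a| = 1] for [a \in A] is used. *)
move=> E_disc Einf _ E_closure [S [K [cK K_disc S_A E_cover]]].
have A_circle : {in A, forall a, cabs a = 1}.
  by move=> a aA; have [] : (closure (E : set R[i]^o) `&` @unit_circle R) a by rewrite E_closure.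
have [r [r0 r1 K_r]] := compact_in_disc_radius cK K_disc.
have [c [c0 S_c]] := exists_ub_seq (fun s : R[i] * R => s.2) S.
have S_stolz s : s \in S -> s.1 \in A /\ 0 <= s.2 <= c.
  by move=> sS; have [sA s1] := S_A s sS; rewrite S_c // andbT; split=> //; lra.
have q1 := qbound_ge1 A.
exists 4^-1, ((c + 162) * qbound A), (Num.truncn ((1 - r) ^+ 4)^-1).+1.
split=> [||n nN]; [by rewrite invr_gt0 | by rewrite mulr_gt0 //; lra |].
have [u0 nu ur] := quarter_root_bounds r1 nN.
apply: Mn_le_removal => //; first by rewrite mulr_ge0 // ltW // mulr_gt0 //; lra.
move=> Z [nZ ZE] _.
by apply: exists_small_removal E_disc r0 K_r c0 S_stolz E_cover _ _ u0 ur _ _; rewrite ?nZ.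
Qed.
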